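(* Let $X$ be a real Banach space and $T:X\rightrightarrows X^*$ maximal monotone. The following are equivalent: 1. $D(T)$ is bounded; 2. for every $h\in\mathcal{F}_T$, $P_1(D(h))$ is bounded; 3. there exists $h\in\mathcal{F}_T$ with $P_1(D(h))$ bounded; 4. the functions $h(x,\cdot):X^*\to\mathbb{R}\cup\{\pm\infty\}$, for $h\in\mathcal{F}_T$ lower semicontinuous in the strong$\times$weak-$*$ topology and $x\in P_1D(h)$, are all real-valued and there is $0\leq L<\infty$ with $|h(x,x^* )-h(x,z^* )|\leq L\|x^*-z^*\|$ for all such $h$ and $x$ and all $x^*,z^*\in X^*$; 5. there exists $h\in\mathcal{F}_T$, lower semicontinuous in the strong$\times$weak-$*$ topology, such that the functions $h(x,\cdot)$, $x\in P_1D(h)$, are all real-valued and there is $0\leq L<\infty$ with $|h(x,x^* )-h(x,z^* )|\leq L\|x^*-z^*\|$ for all $x\in P_1D(h)$, $x^*,z^*\in X^*$.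
   Context: An operator $T:X\rightrightarrows X^*$ is a subset of $X\times X^*$, with domain $D(T)$ its projection onto $X$; $T$ is monotone if $\langle x-y,x^*-y^*\rangle\geq0$ for all $(x,x^* ),(y,y^* )\in T$, and maximal monotone if it is monotone and not properly contained in another monotone operator. $\mathcal{F}_T$ is the set of all convex lower semicontinuous (in the norm topology) $h:X\times X^*\to\mathbb{R}\cup\{\pm\infty\}$ with $h(x,x^* )\geq\langle x,x^*\rangle$ for all $(x,x^* )$ and equality on $T$. ''Strong$\times$weak-$*$'' is the product of the norm topology on $X$ and the weak-$*$ topology on $X^*$. $P_1,P_2$ are the canonical projections of $X\times X^*$ onto $X$ and $X^*$; $D(h)=\{z\;|\;h(z)<\infty\}$. *)

From HB Require Import structures.
From mathcomp Require Import all_boot all_order all_algebra.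
From mathcomp Require Import all_classical all_reals all_analysis.
Set Implicit Arguments. Unset Strict Implicit. Unset Printing Implicit Defensive.
Import Order.TTheory GRing.Theory Num.Theory.
Import numFieldNormedType.Exports.
Local Open Scope classical_set_scope.
Local Open Scope ring_scope.

(* X is a real normed space; its dual X^* is represented as the set of
   continuous linear functionals f : X -> R. *)

Section MonotoneDefs.
Variables (R : realType) (X : normedModType R).

Definition dual_elt (f : X -> R) : Prop :=
  (forall (a : R) (x y : X), f (a *: x + y) = a * f x + f y) /\ continuous f.

Definition dual_norm (f : X -> R) : R :=
  sup [set `|f x| | x in [set x : X | `|x| <= 1]].

Definition dsub (f g : X -> R) : X -> R := fun y => f y - g y.

(* an operator T : X => X^* is a subset of X x X^* *)
Definition operator (T : set (X * (X -> R))) : Prop :=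
  forall z, T z -> dual_elt z.2.

Definition domain (T : set (X * (X -> R))) : set X :=
  [set x | exists xs, T (x, xs)].

Definition monotone (T : set (X * (X -> R))) : Prop :=
  forall x xs y ys, T (x, xs) -> T (y, ys) -> 0 <= xs (x - y) - ys (x - y).

Definition maximal_monotone (T : set (X * (X -> R))) : Prop :=
  operator T /\ monotone T /\
  forall S : set (X * (X -> R)), operator S -> monotone S -> T `<=` S -> S = T.

(* convexity of h : X x X^* -> [-oo,+oo] (convexity of its epigraph) *)
Definition convex_fn (h : X -> (X -> R) -> \bar R) : Prop :=
  forall x1 xs1 x2 xs2 (t1 t2 l : R),
    dual_elt xs1 -> dual_elt xs2 ->
    (h x1 xs1 <= t1%:E)%E -> (h x2 xs2 <= t2%:E)%E -> 0 <= l <= 1 ->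
    (h (l *: x1 + (1 - l) *: x2)%R (fun y => l * xs1 y + (1 - l) * xs2 y)%R
      <= (l * t1 + (1 - l) * t2)%:E)%E.

Definition lsc_strong (h : X -> (X -> R) -> \bar R) : Prop :=
  forall x0 xs0 (t : R), dual_elt xs0 -> (t%:E < h x0 xs0)%E ->
    exists eps : R, 0 < eps /\
      forall x xs, dual_elt xs -> `|x - x0| < eps ->
        dual_norm (dsub xs xs0) < eps -> (t%:E < h x xs)%E.

(* lower semicontinuity w.r.t. the (norm of X) x (weak-* of X^* ) topology;
   basic weak-* neighbourhoods are given by finitely many points ys and eps *)
Definition lsc_strong_weakstar (h : X -> (X -> R) -> \bar R) : Prop :=
  forall x0 xs0 (t : R), dual_elt xs0 -> (t%:E < h x0 xs0)%E ->
    exists (eps : R) (ys : seq X), 0 < eps /\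
      forall x xs, dual_elt xs -> `|x - x0| < eps ->
        (forall y, y \in ys -> `|xs y - xs0 y| < eps) -> (t%:E < h x xs)%E.

Definition fitz_family (T : set (X * (X -> R))) (h : X -> (X -> R) -> \bar R)
  : Prop :=
  convex_fn h /\ lsc_strong h /\
  (forall x xs, dual_elt xs -> ((xs x)%:E <= h x xs)%E) /\
  (forall x xs, T (x, xs) -> h x xs = (xs x)%:E).

Definition P1D (h : X -> (X -> R) -> \bar R) : set X :=
  [set x | exists xs, dual_elt xs /\ (h x xs < +oo)%E].

Definition real_lip (L : R) (h : X -> (X -> R) -> \bar R) : Prop :=
  forall x, P1D h x ->
    (forall xs, dual_elt xs -> h x xs \is a fin_num) /\
    (forall xs zs, dual_elt xs -> dual_elt zs ->
       (`|h x xs - h x zs| <= (L * dual_norm (dsub xs zs))%:E)%E).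

End MonotoneDefs.

(* If D(T) lies in the ball of radius M, every h in F_T satisfies
   h >= phi_T (the Fitzpatrick function), and a point (y, y* ) with
   phi_T(y, y* ) < +oo has |y| <= M: otherwise adding a large multiple of a
   functional norming y to y* gives a pair monotonically related to T, which
   maximality puts into T.  This bounds P_1 D(h).  For h strong x weak-*
   lower semicontinuous, a Hahn-Banach separation in X x X^* x R, against a
   weak-* neighbourhood, writes h as a supremum of affine minorants
   (u, u* ) |-> <u, y*> + <y, u*> - c with y in X; the same argument gives
   |y| <= M, so each h(x, .) is M-Lipschitz.  Conversely, testing h(x, .) at
   s l, with l norming x, yields s |x| <= h(x, x0* ) + L (s + |x0*|) for all
   s >= 0, hence |x| <= L.  The Fitzpatrick function itself witnesses the
   existential statements. *)

From Pilot Require Import Defs.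
From HB Require Import structures.
From mathcomp Require Import all_boot all_order all_algebra.
From mathcomp Require Import all_classical all_reals all_analysis.
From mathcomp Require Import ring lra.
Import Order.TTheory GRing.Theory Num.Theory.
Import numFieldNormedType.Exports.
Local Open Scope classical_set_scope.
Local Open Scope ring_scope.
Set Implicit Arguments. Unset Strict Implicit. Unset Printing Implicit Defensive.

(** * Sublinear functionals and the Hahn-Banach theorem *)

Section Sublinear.
Variables (R : realType) (V : lmodType R).

Definition sublinear (q : V -> R) :=
  (forall u v, q (u + v) <= q u + q v) /\
  (forall (a : R) v, 0 <= a -> q (a *: v) = a * q v).

Definition linear_form (l : V -> R) :=
  forall (a : R) u v, l (a *: u + v) = a * l u + l v.

Definition segment_closed (K : set V) :=
  forall k1 k2 (l : R), K k1 -> K k2 -> 0 <= l <= 1 -> K (l *: k1 + (1 - l) *: k2).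

Section LinearForm.
Variable l : V -> R.
Hypothesis hl : linear_form l.

Lemma linear_form0 : l 0 = 0.
Proof. by have := hl 1 0 0; rewrite scaler0 addr0 mul1r; lra. Qed.

Lemma linear_formD u v : l (u + v) = l u + l v.
Proof. by have := hl 1 u v; rewrite scale1r mul1r. Qed.

Lemma linear_formZ a u : l (a *: u) = a * l u.
Proof. by have := hl a u 0; rewrite addr0 linear_form0 addr0. Qed.

Lemma linear_formN u : l (- u) = - l u.
Proof. by rewrite -scaleN1r linear_formZ mulN1r. Qed.

Lemma linear_formB u v : l (u - v) = l u - l v.
Proof. by rewrite linear_formD linear_formN. Qed.

End LinearForm.

Lemma sublinear0 q : sublinear q -> q 0 = 0.
Proof. by move=> [_ qZ]; have := qZ 0 0 (lexx 0); rewrite scale0r mul0r. Qed.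

Lemma sublinear_ge_opp q u : sublinear q -> - q (- u) <= q u.
Proof.
by move=> sq; have := sq.1 u (- u); rewrite subrr (sublinear0 sq); lra.
Qed.

Lemma linear_form_of_sublinear q :
  sublinear q -> (forall w, q (- w) <= - q w) -> linear_form q.
Proof.
move=> sq qN_le.
have qN w : q (- w) = - q w.
  by apply/eqP; rewrite eq_le qN_le /=; have := sublinear_ge_opp w sq; lra.
have qD u v : q (u + v) = q u + q v.
  apply/eqP; rewrite eq_le sq.1 /=.
  by have := sq.1 (- u) (- v); rewrite -opprD !qN; lra.
move=> a u v; rewrite qD; congr (_ + _).
have [a0|a0] := leP 0 a; first by rewrite sq.2.
have -> : a *: u = - ((- a) *: u) by rewrite scaleNr opprK.
by rewrite qN sq.2 ?oppr_ge0 ?ltW // mulNr opprK.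
Qed.

Section InfSublinear.
Variables (q : V -> R) (S : V -> set R).
Hypotheses (sq : sublinear q) (Sq : forall v, S v (q v))
  (S_ge : forall v y, S v y -> - q (- v) <= y)
  (SD : forall u v x y, S u x -> S v y -> exists2 z, S (u + v) z & z <= x + y)
  (SZ : forall (a : R) v y, 0 < a -> S v y -> S (a *: v) (a * y)).

Lemma inf_le_member v y : S v y -> inf (S v) <= y.
Proof. by move=> Svy; apply: ge_inf Svy; exists (- q (- v)) => z /S_ge. Qed.

Lemma inf_le_bound v : inf (S v) <= q v.
Proof. exact: inf_le_member. Qed.

Lemma inf_ge_bound v : - q (- v) <= inf (S v).
Proof. by apply: lb_le_inf; [exists (q v) | exact: S_ge]. Qed.

Lemma inf_sublinear : sublinear (fun v => inf (S v)).
Proof.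
have Sne v : S v !=set0 by exists (q v).
split=> [u v|a v a_ge0].
  suff : inf (S (u + v)) - inf (S v) <= inf (S u) by lra.
  apply: lb_le_inf => // x Sux.
  suff : inf (S (u + v)) - x <= inf (S v) by lra.
  apply: lb_le_inf => // y Svy.
  have [z Sz zxy] := SD Sux Svy.
  by have := inf_le_member Sz; lra.
have [->|a_neq0] := eqVneq a 0.
  rewrite scale0r mul0r; apply/eqP; rewrite eq_le.
  have := inf_le_bound 0; have := inf_ge_bound 0.
  by rewrite oppr0 (sublinear0 sq) oppr0 => -> ->.
have a_gt0 : 0 < a by rewrite lt0r a_neq0.
apply/eqP; rewrite eq_le; apply/andP; split.
  rewrite -ler_pdivrMl //; apply: lb_le_inf => // y Svy.
  by rewrite ler_pdivrMl //; apply/inf_le_member/SZ.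
apply: lb_le_inf => // y Savy; rewrite -ler_pdivlMl //; apply: inf_le_member.
have ai_gt0 : 0 < a^-1 by rewrite invr_gt0.
by have := SZ ai_gt0 Savy; rewrite scalerA mulVf // scale1r.
Qed.

End InfSublinear.

(* The disjunct [t = 0] keeps the family nonempty when [K] is empty. *)
Definition shifted_set (q : V -> R) (K : set V) (c : R) (v : V) : set R :=
  [set r | exists t k, [/\ 0 <= t, t = 0 \/ K k & r = q (v + t *: k) - t * c]].

Definition shifted q K c v := inf (shifted_set q K c v).

Section Shifted.
Variables (q : V -> R) (K : set V) (c : R).
Hypotheses (sq : sublinear q) (cK : segment_closed K) (c_le : forall k, K k -> c <= q k).

Let shifted_set_q v : shifted_set q K c v (q v).
Proof. by exists 0, 0; split; [|left|rewrite scale0r addr0 mul0r subr0]. Qed.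

Let shifted_set_ge v y : shifted_set q K c v y -> - q (- v) <= y.
Proof.
case=> t [k [t_ge0 tK ->]].
have := sq.1 (v + t *: k) (- v); rewrite addrC addKr.
have : t * c <= q (t *: k).
  rewrite sq.2 //; case: tK => [->|Kk]; first by rewrite !mul0r.
  by rewrite ler_wpM2l // c_le.
lra.
Qed.

Let shifted_setD u v x y : shifted_set q K c u x -> shifted_set q K c v y ->
  exists2 z, shifted_set q K c (u + v) z & z <= x + y.
Proof.
move=> [t1 [k1 [t1_ge0 tK1 ->]]] [t2 [k2 [t2_ge0 tK2 ->]]].
have [-> | t1_neq0] := eqVneq t1 0.
  exists (q (u + v + t2 *: k2) - t2 * c); first by exists t2, k2.
  by rewrite scale0r addr0 mul0r subr0 -addrA; have := sq.1 u (v + t2 *: k2); lra.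
have [-> | t2_neq0] := eqVneq t2 0.
  exists (q (u + v + t1 *: k1) - t1 * c); first by exists t1, k1.
  by rewrite scale0r addr0 mul0r subr0 addrAC; have := sq.1 (u + t1 *: k1) v; lra.
have Kk1 : K k1 by case: tK1 => // /eqP; rewrite (negbTE t1_neq0).
have Kk2 : K k2 by case: tK2 => // /eqP; rewrite (negbTE t2_neq0).
have t_gt0 : 0 < t1 + t2 by rewrite ltr_wpDr // lt0r t1_neq0.
pose l := t1 / (t1 + t2).
have Kk : K (l *: k1 + (1 - l) *: k2).
  apply: cK => //; apply/andP; split; first by rewrite divr_ge0 // ltW.
  by rewrite ler_pdivrMr // mul1r lerDl.
have ek : (t1 + t2) *: (l *: k1 + (1 - l) *: k2) = t1 *: k1 + t2 *: k2.
  by rewrite scalerDr !scalerA mulrBr mulr1 mulrCA mulfV ?gt_eqF // mulr1 (addrC t1) addrK.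
exists (q (u + v + (t1 + t2) *: (l *: k1 + (1 - l) *: k2)) - (t1 + t2) * c).
  by exists (t1 + t2), (l *: k1 + (1 - l) *: k2); split; [exact: ltW|right|].
by rewrite ek addrACA; have := sq.1 (u + t1 *: k1) (v + t2 *: k2); lra.
Qed.

Let shifted_setZ (a : R) v y :
  0 < a -> shifted_set q K c v y -> shifted_set q K c (a *: v) (a * y).
Proof.
move=> a_gt0 [t [k [t_ge0 tK ->]]]; exists (a * t), k; split.
- by rewrite mulr_ge0 // ltW.
- by case: tK => [->|]; [left; rewrite mulr0|right].
- by rewrite -scalerA -scalerDr sq.2 ?ltW // mulrBr mulrA.
Qed.

Lemma shifted_sublinear : sublinear (shifted q K c).
Proof. exact: inf_sublinear sq shifted_set_q shifted_set_ge shifted_setD shifted_setZ. Qed.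

Lemma shifted_le v : shifted q K c v <= q v.
Proof. exact: (@inf_le_bound q (shifted_set q K c) shifted_set_q shifted_set_ge v). Qed.

Lemma shifted_opp_le k : K k -> shifted q K c (- k) <= - c.
Proof.
move=> Kk; apply: (inf_le_member shifted_set_ge).
by exists 1, k; split => //; [right|rewrite scale1r addNr (sublinear0 sq) mul1r sub0r].
Qed.

End Shifted.

Lemma segment_closed1 w : segment_closed [set w].
Proof. by move=> _ _ l -> -> _; rewrite -scalerDl subrKC scale1r. Qed.

Lemma chain_lower_bound (Q : V -> R) (C : set (V -> R)) : sublinear Q ->
  (forall p, C p -> sublinear p /\ forall v, p v <= Q v) ->
  (forall p r, C p -> C r -> (forall v, p v <= r v) \/ (forall v, r v <= p v)) ->
  exists g, [/\ sublinear g, forall v, g v <= Q v & forall p, C p -> forall v, g v <= p v].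
Proof.
move=> sQ C_le C_total; pose CQ := C `|` [set Q].
have CQ_le p : CQ p -> sublinear p /\ forall v, p v <= Q v by case=> [/C_le|->].
have CQ_total p r : CQ p -> CQ r -> (forall v, p v <= r v) \/ (forall v, r v <= p v).
  case=> [Cp|->]; case=> [Cr|->]; first exact: C_total.
  - by left; case: (C_le p Cp).
  - by right; case: (C_le r Cr).
  - by left.
pose S v := [set p v | p in CQ].
have S_Q v : S v (Q v) by exists Q => //; right.
have S_ge v y : S v y -> - Q (- v) <= y.
  by case=> p /CQ_le [sp pQ] <-; have := sublinear_ge_opp v sp; have := pQ (- v); lra.
have SD u v x y : S u x -> S v y -> exists2 z, S (u + v) z & z <= x + y.
  move=> [p CQp <-] [r CQr <-].
  have [[sp _] [sr _]] := (CQ_le p CQp, CQ_le r CQr).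
  case: (CQ_total p r CQp CQr) => [pr|rp].
  - by exists (p (u + v)); [exists p | have := sp.1 u v; have := pr v; lra].
  - by exists (r (u + v)); [exists r | have := sr.1 u v; have := rp u; lra].
have SZ a v y : 0 < a -> S v y -> S (a *: v) (a * y).
  move=> a_gt0 [p CQp <-]; exists p => //.
  by have [[_ pZ] _] := CQ_le p CQp; rewrite pZ // ltW.
exists (fun v => inf (S v)); split.
- exact: inf_sublinear sQ S_Q S_ge SD SZ.
- exact: inf_le_bound S_Q S_ge.
- by move=> p Cp v; apply: (inf_le_member S_ge); exists p => //; left.
Qed.

(* By Zorn's lemma the sublinear minorants of [Q] have a pointwise minimal
   element [t]; [shifted t [set w] (t w)] is again such a minorant, so
   minimality forces [t (- w) <= - t w], i.e. [t] is linear. *)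
Theorem hahn_banach (Q : V -> R) :
  sublinear Q -> exists l, linear_form l /\ forall v, l v <= Q v.
Proof.
move=> sQ.
pose T := {q : V -> R | `[< sublinear q /\ forall v, q v <= Q v >]}.
have QT : `[< sublinear Q /\ forall v, Q v <= Q v >] by apply/asboolP.
pose above (p q : T) : bool := `[< forall v, sval q v <= sval p v >].
have [t tmin] : exists t, premaximal above t.
  apply: (@ZL_preorder _ (exist _ Q QT)).
  - by move=> p; apply/asboolP.
  - move=> p q r /asboolP pq /asboolP qr; apply/asboolP => v.
    exact: le_trans (qr v) (pq v).
  move=> A Achain.
  have C_le p : (sval @` A) p -> sublinear p /\ forall v, p v <= Q v.
    by case=> q _ <-; exact: asboolW (svalP q).
  have C_total p r : (sval @` A) p -> (sval @` A) r ->
      (forall v, p v <= r v) \/ (forall v, r v <= p v).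
    move=> [p' Ap <-] [r' Ar <-].
    by have [/asboolP pr|/asboolP rp] := Achain p' r' Ap Ar; [right | left].
  have [g [sg gQ g_le]] := chain_lower_bound sQ C_le C_total.
  have gT : `[< sublinear g /\ forall v, g v <= Q v >] by apply/asboolP.
  exists (exist _ g gT) => p Ap; apply/asboolP => v /=.
  by apply: g_le; exists p.
have [st tQ] := asboolW (svalP t).
exists (sval t); split => //.
apply: linear_form_of_sublinear => // w.
have c_le k : [set w] k -> sval t w <= sval t k by move=> ->.
pose s := shifted (sval t) [set w] (sval t w).
have s_le v : s v <= sval t v := shifted_le st c_le v.
have sT : `[< sublinear s /\ forall v, s v <= Q v >].
  apply/asboolP; split; first exact: (shifted_sublinear st (@segment_closed1 w) c_le).
  by move=> v; apply: le_trans (s_le v) (tQ v).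
have /asboolP /(_ (- w)) := tmin (exist _ s sT) (asboolT s_le).
by move/le_trans; apply; apply: shifted_opp_le.
Qed.

Theorem sublinear_separation (N : V -> R) (K : set V) :
  sublinear N -> segment_closed K -> (forall k, K k -> 1 <= N k) ->
  exists l, [/\ linear_form l, forall v, l v <= N v & forall k, K k -> 1 <= l k].
Proof.
move=> sN cK KN.
have [l [hl l_le]] := hahn_banach (shifted_sublinear sN cK KN).
exists l; split => // [v|k Kk]; first exact: le_trans (l_le v) (shifted_le sN KN v).
have := le_trans (l_le (- k)) (shifted_opp_le sN KN Kk).
by rewrite linear_formN //; lra.
Qed.

End Sublinear.

(** * Continuous linear functionals *)

Section DualElt.
Variables (R : realType) (X : normedModType R).
Implicit Types (f g : X -> R) (u v : X).

Lemma dual_elt_linear f : dual_elt f -> linear_form f.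
Proof. by case. Qed.

Section DualEltAlgebra.
Variable f : X -> R.
Hypothesis df : dual_elt f.

Lemma dual_elt0 : f 0 = 0.
Proof. exact/linear_form0/dual_elt_linear. Qed.

Lemma dual_eltB u v : f (u - v) = f u - f v.
Proof. exact/linear_formB/dual_elt_linear. Qed.

Lemma dual_eltZ a u : f (a *: u) = a * f u.
Proof. exact/linear_formZ/dual_elt_linear. Qed.

End DualEltAlgebra.

Lemma dual_elt_bound f : dual_elt f -> exists2 C, 0 < C & forall v, `|f v| <= C * `|v|.
Proof.
move=> df; have f0 := dual_elt0 df.
have := df.2 0; move/cvgrPdist_lt => /(_ 1 ltr01).
rewrite f0 => /nbhs_norm0P [e /= e_gt0 fe].
exists (2 / e) => [|v]; first by rewrite divr_gt0.
have [->|v_neq0] := eqVneq v 0; first by rewrite f0 !normr0 mulr0.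
have v_gt0 : 0 < `|v| by rewrite normr_gt0.
pose s := e / (2 * `|v|).
have s_gt0 : 0 < s by rewrite divr_gt0 // mulr_gt0.
have sv : s * `|v| < e.
  have -> : s * `|v| = e / 2 by rewrite /s; field; rewrite gt_eqF.
  lra.
have := fe (s *: v); rewrite /= normrZ gtr0_norm // sub0r normrN dual_eltZ //.
rewrite normrM gtr0_norm // => /(_ sv) /ltW.
rewrite -ler_pdivlMl // => /le_trans; apply.
suff -> : s^-1 * 1 = 2 / e * `|v| by [].
by rewrite /s; field; rewrite !gt_eqF.
Qed.

Lemma bounded_linear_dual_elt f C : linear_form f -> 0 < C ->
  (forall v, `|f v| <= C * `|v|) -> dual_elt f.
Proof.
move=> lf C_gt0 fC; split => // x; apply/cvgrPdist_lt => e e_gt0.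
have eC : 0 < e / C by rewrite divr_gt0.
near=> z; rewrite -linear_formB //; apply: le_lt_trans (fC _) _.
rewrite -ltr_pdivlMl // mulrC; near: z.
exact: cvgr_dist_lt.
Unshelve. all: by end_near. Qed.

Lemma dual_elt_comb f g (a b : R) : dual_elt f -> dual_elt g ->
  dual_elt (fun y => a * f y + b * g y).
Proof.
move=> df dg; have [C1 C1_gt0 fC1] := dual_elt_bound df.
have [C2 C2_gt0 gC2] := dual_elt_bound dg.
apply: (@bounded_linear_dual_elt _ (`|a| * C1 + `|b| * C2 + 1)).
- by move=> c u v /=; rewrite (dual_elt_linear df c u v) (dual_elt_linear dg c u v); ring.
- by rewrite ltr_wpDl // addr_ge0 // mulr_ge0 // ltW.
move=> v; apply: le_trans (ler_normD _ _) _; rewrite !normrM.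
have := ler_wpM2l (normr_ge0 a) (fC1 v); have := ler_wpM2l (normr_ge0 b) (gC2 v).
have := normr_ge0 v; nra.
Qed.

Lemma dual_elt_scale f (a : R) : dual_elt f -> dual_elt (fun y => a * f y).
Proof.
move=> df; have := dual_elt_comb a 0 df df.
by congr dual_elt; apply/funext => y; rewrite mul0r addr0.
Qed.

Lemma dual_elt_dsub f g : dual_elt f -> dual_elt g -> dual_elt (dsub f g).
Proof.
move=> df dg; have := dual_elt_comb 1 (-1) df dg.
by congr dual_elt; apply/funext => y; rewrite /dsub; ring.
Qed.

Lemma dual_norm_le f C : (forall v, `|v| <= 1 -> `|f v| <= C) -> dual_norm f <= C.
Proof.
move=> fC; apply: ge_sup; first by exists `|f 0|, 0 => //=; rewrite normr0.
by move=> _ [v /= v1 <-]; exact: fC.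
Qed.

Lemma ball_le_dual_norm f v : dual_elt f -> `|v| <= 1 -> `|f v| <= dual_norm f.
Proof.
move=> df v1; have [C C_gt0 fC] := dual_elt_bound df.
apply: ub_le_sup; last by exists v.
exists C => _ [u /= u1 <-]; apply: le_trans (fC u) _.
by rewrite -[leRHS]mulr1 ler_wpM2l // ltW.
Qed.

Lemma dual_norm_ge0 f : dual_elt f -> 0 <= dual_norm f.
Proof.
by move=> df; apply: le_trans (normr_ge0 (f 0)) (ball_le_dual_norm df _); rewrite normr0.
Qed.

Lemma le_dual_norm f v : dual_elt f -> `|f v| <= dual_norm f * `|v|.
Proof.
move=> df; have [->|v_neq0] := eqVneq v 0.
  by rewrite dual_elt0 // !normr0 mulr0.
have v_gt0 : 0 < `|v| by rewrite normr_gt0.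
have unit_v : `| `|v|^-1 *: v | <= 1.
  by rewrite normrZ gtr0_norm ?invr_gt0 // mulVf ?gt_eqF.
have := ball_le_dual_norm df unit_v.
by rewrite dual_eltZ // normrM gtr0_norm ?invr_gt0 // ler_pdivrMl // mulrC.
Qed.

Lemma dual_norm_dsubC f g : dual_norm (dsub f g) = dual_norm (dsub g f).
Proof.
rewrite /dual_norm; congr sup; apply/seteqP; split => _ [v v1 <-];
  by exists v => //; rewrite /dsub distrC.
Qed.

Lemma norming_functional y :
  exists l, [/\ dual_elt l, l y = `|y| & forall v, `|l v| <= `|v|].
Proof.
have norm_sublinear : sublinear (fun v : X => `|v|).
  by split=> [u v|a v a_ge0]; [exact: ler_normD | rewrite normrZ ger0_norm].
have [->|y_neq0] := eqVneq y 0.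
  exists (fun=> 0); split => [||v]; rewrite ?normr0 //.
  by apply: (@bounded_linear_dual_elt _ 1) => // [a u v|v]; rewrite ?normr0 ?mulr0 ?addr0 ?mul1r.
have y_gt0 : 0 < `|y| by rewrite normr_gt0.
pose k := `|y|^-1 *: y.
have k_ge1 k' : [set k] k' -> 1 <= `|k'|.
  by move=> ->; rewrite normrZ gtr0_norm ?invr_gt0 // mulVf ?gt_eqF.
have [l [hl l_le lk]] :=
  sublinear_separation norm_sublinear (@segment_closed1 _ _ k) k_ge1.
have l_norm v : `|l v| <= `|v|.
  by rewrite ler_norml l_le andbT lerNl -linear_formN // -normrN l_le.
exists l; split => //.
  by apply: (@bounded_linear_dual_elt _ 1) => // v; rewrite mul1r.
apply/eqP; rewrite eq_le (le_trans (ler_norm _) (l_norm y)) /=.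
have := lk k erefl.
by rewrite /k linear_formZ // -ler_pdivrMl ?invr_gt0 // invrK ?mul1r ?mulr1.
Qed.

End DualElt.

(** * The Fitzpatrick function *)

Lemma lsc_weakstar_strong (R : realType) (X : normedModType R)
    (h : X -> (X -> R) -> \bar R) :
  lsc_strong_weakstar h -> lsc_strong h.
Proof.
move=> lsc x0 xs0 t d0 /(lsc _ _ _ d0) [e [ys [e_gt0 he]]].
pose m := 1 + \sum_(y <- ys) `|y|.
have m_ge1 : 1 <= m by rewrite lerDl sumr_ge0.
have m_gt0 : 0 < m := lt_le_trans ltr01 m_ge1.
have em_gt0 : 0 < e / m by rewrite divr_gt0.
have emm : e / m * m = e by rewrite mulfVK ?gt_eqF.
exists (e / m); split => // x xs dxs xx0 dn.
apply: he => // [|y ys_y].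
  by apply: lt_le_trans xx0 _; rewrite ler_pdivrMr //; nra.
have y_lt_m : `|y| < m.
  have : `|y| <= \sum_(v <- ys) `|v| by rewrite (big_rem y) //= lerDl sumr_ge0.
  by rewrite /m; lra.
apply: le_lt_trans (le_dual_norm y (dual_elt_dsub dxs d0)) _.
have := normr_ge0 y; nra.
Qed.

Lemma le0_of_affine_le0 (R : realFieldType) (F0 s : R) :
  (forall l, 0 < l -> l < 1 -> F0 + l * s <= 0) -> F0 <= 0.
Proof.
move=> H; have [s_ge0|s_lt0] := leP 0 s.
  have half_gt0 : 0 < 2^-1 :> R by rewrite invr_gt0.
  have half_lt1 : 2^-1 < 1 :> R by rewrite invf_lt1 // ltr1n.
  by have := H _ half_gt0 half_lt1; have := mulr_ge0 (ltW half_gt0) s_ge0; lra.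
rewrite leNgt; apply/negP => F0_gt0.
have d_gt0 : 0 < F0 - 2 * s by lra.
have l_gt0 : 0 < F0 / (F0 - 2 * s) by rewrite divr_gt0.
have l_lt1 : F0 / (F0 - 2 * s) < 1 by rewrite ltr_pdivrMr // mul1r; lra.
have := H _ l_gt0 l_lt1.
have -> : F0 + F0 / (F0 - 2 * s) * s = F0 * (F0 - s) / (F0 - 2 * s).
  by field; rewrite gt_eqF.
have : 0 < F0 * (F0 - s) / (F0 - 2 * s) by rewrite divr_gt0 // mulr_gt0 //; lra.
lra.
Qed.

Section Fitzpatrick.
Variables (R : realType) (X : normedModType R) (T : set (X * (X -> R))).

Lemma maximal_monotone_mem x xs : maximal_monotone T -> dual_elt xs ->
  (forall a as_, T (a, as_) -> 0 <= xs (x - a) - as_ (x - a)) -> T (x, xs).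
Proof.
move=> [opT [monT maxT]] dxs x_mon.
pose S := T `|` [set (x, xs)].
have opS : operator S by move=> z [/opT //|-> /=].
have monS : Defs.monotone S.
  move=> x1 xs1 x2 xs2 [T1|[-> ->]] [T2|[-> ->]].
  - exact: monT.
  - have d1 : dual_elt xs1 := opT _ T1.
    by have := x_mon _ _ T1; rewrite !(dual_eltB dxs) !(dual_eltB d1); lra.
  - exact: x_mon.
  - by rewrite subrr.
by rewrite -(maxT S opS monS (fun z Tz => or_introl Tz)); right.
Qed.

Definition fitzpatrick (x : X) (xs : X -> R) : \bar R :=
  ereal_sup [set (z.2 x + xs z.1 - z.2 z.1)%:E | z in T].

Lemma fitzpatrick_ge x xs a as_ :
  T (a, as_) -> ((as_ x + xs a - as_ a)%:E <= fitzpatrick x xs)%E.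
Proof. by move=> Ta; apply: ereal_sup_ubound; exists (a, as_). Qed.

Lemma fitzpatrick_le x xs e :
  (forall a as_, T (a, as_) -> ((as_ x + xs a - as_ a)%:E <= e)%E) ->
  (fitzpatrick x xs <= e)%E.
Proof. by move=> Te; apply: ge_ereal_sup => _ [[a as_] Ta <-]; exact: Te. Qed.

Lemma fitzpatrick_gt x xs (t : R) : (t%:E < fitzpatrick x xs)%E ->
  exists a as_, T (a, as_) /\ t < as_ x + xs a - as_ a.
Proof.
by move=> /ereal_sup_gt [_ [[a as_] Ta <-]]; rewrite lte_fin => ?; exists a, as_.
Qed.

Lemma fitzpatrick_convex : operator T -> convex_fn fitzpatrick.
Proof.
move=> opT x1 xs1 x2 xs2 t1 t2 l d1 d2 h1 h2 /andP[l_ge0 l_le1].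
apply: fitzpatrick_le => a as_ Ta; have das : dual_elt as_ := opT _ Ta.
have := le_trans (fitzpatrick_ge x1 xs1 Ta) h1.
have := le_trans (fitzpatrick_ge x2 xs2 Ta) h2.
rewrite !lee_fin /= (dual_elt_linear das) (dual_eltZ das) => e2 e1.
have l'_ge0 : 0 <= 1 - l by rewrite subr_ge0.
by have := ler_wpM2l l_ge0 e1; have := ler_wpM2l l'_ge0 e2; lra.
Qed.

Lemma fitzpatrick_ge_pairing x xs : maximal_monotone T -> dual_elt xs ->
  ((xs x)%:E <= fitzpatrick x xs)%E.
Proof.
move=> mT dxs; have [opT _] := mT; rewrite leNgt; apply/negP => fitz_lt.
have x_mon a as_ : T (a, as_) -> 0 < xs (x - a) - as_ (x - a).
  move=> Ta; have das : dual_elt as_ := opT _ Ta.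
  have := le_lt_trans (fitzpatrick_ge x xs Ta) fitz_lt.
  by rewrite lte_fin (dual_eltB dxs) (dual_eltB das); lra.
have Tx := maximal_monotone_mem mT dxs (fun a as_ Ta => ltW (x_mon a as_ Ta)).
by have := x_mon _ _ Tx; rewrite subrr ltxx.
Qed.

Lemma fitzpatrick_eq a as_ : operator T -> Defs.monotone T ->
  T (a, as_) -> fitzpatrick a as_ = (as_ a)%:E.
Proof.
move=> opT monT Ta; apply/eqP; rewrite eq_le; apply/andP; split.
  apply: fitzpatrick_le => b bs Tb; rewrite lee_fin.
  have da : dual_elt as_ := opT _ Ta; have db : dual_elt bs := opT _ Tb.
  by have := monT _ _ _ _ Ta Tb; rewrite (dual_eltB da) (dual_eltB db); lra.
by apply: le_trans (fitzpatrick_ge a as_ Ta); rewrite lee_fin addrK.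
Qed.

Lemma fitzpatrick_lsc_weakstar : operator T -> lsc_strong_weakstar fitzpatrick.
Proof.
move=> opT x0 xs0 t d0 /fitzpatrick_gt [a [as_ [Ta t_lt]]].
have das : dual_elt as_ := opT _ Ta; have [C C_gt0 asC] := dual_elt_bound das.
pose g := as_ x0 + xs0 a - as_ a - t.
have g_gt0 : 0 < g by rewrite /g; lra.
pose e := g / (2 * (C + 1)).
have e_gt0 : 0 < e by rewrite divr_gt0 // mulr_gt0 // ltr_wpDl // ltW.
have eg : e * (C + 1) = g / 2 by rewrite /e; field; rewrite gt_eqF // ltr_wpDl // ltW.
exists e, [:: a]; split => // x xs dxs xx0 xs_near.
apply: lt_le_trans (fitzpatrick_ge x xs Ta); rewrite lte_fin.
have : `|as_ (x - x0)| <= C * e by apply: le_trans (asC _) _; rewrite ler_wpM2l ?ltW.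
have := xs_near a (mem_head _ _).
rewrite (dual_eltB das) ler_norml ltr_norml => /andP[? ?] /andP[? ?].
rewrite /g in eg; nra.
Qed.

Lemma fitzpatrick_fitz_family : maximal_monotone T -> fitz_family T fitzpatrick.
Proof.
move=> mT; have [opT [monT _]] := mT.
split; first exact: fitzpatrick_convex.
split; first exact/lsc_weakstar_strong/fitzpatrick_lsc_weakstar.
split=> [x xs|a as_]; first exact: fitzpatrick_ge_pairing.
exact: fitzpatrick_eq.
Qed.

Lemma fitz_family_pairing_le h x xs a as_ (r : R) :
  operator T -> fitz_family T h -> dual_elt xs -> T (a, as_) ->
  (h x xs <= r%:E)%E -> as_ x + xs a - as_ a <= r.
Proof.
move=> opT [h_cvx [_ [h_ge h_eq]]] dxs Ta hr; have das : dual_elt as_ := opT _ Ta.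
suff : as_ x + xs a - as_ a - r <= 0 by lra.
apply: (@le0_of_affine_le0 _ _ (xs x - as_ x - xs a + as_ a)) => l l_gt0 l_lt1.
have l01 : 0 <= l <= 1 by rewrite !ltW.
have ha : (h a as_ <= (as_ a)%:E)%E by rewrite h_eq.
have dc : dual_elt (fun y => l * xs y + (1 - l) * as_ y) by apply: dual_elt_comb.
have := le_trans (h_ge _ _ dc) (h_cvx _ _ _ _ _ _ _ dxs das hr ha l01).
rewrite lee_fin (dual_elt_linear dxs) (dual_elt_linear das) !(dual_eltZ dxs) !(dual_eltZ das).
move=> H; rewrite -(pmulr_rle0 _ l_gt0); nra.
Qed.

Lemma fitz_family_ge_fitzpatrick h x xs : operator T -> fitz_family T h -> dual_elt xs ->
  (fitzpatrick x xs <= h x xs)%E.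
Proof.
move=> opT hF dxs; have [_ [_ [h_ge _]]] := hF.
apply: fitzpatrick_le => a as_ Ta; have := h_ge x xs dxs.
case hx: (h x xs) => [r| |] // _; last by rewrite leey.
by rewrite lee_fin; apply: (fitz_family_pairing_le opT hF dxs Ta); rewrite hx.
Qed.

Lemma bounded_domain_fitzpatrick (M C : R) y ys : maximal_monotone T ->
  (forall a, domain T a -> `|a| <= M) -> dual_elt ys ->
  (fitzpatrick y ys <= C%:E)%E -> `|y| <= M.
Proof.
move=> mT domM dys fitzC; have [opT _] := mT.
rewrite leNgt; apply/negP => M_lt_y.
have [l [dl ly l_norm]] := norming_functional y.
have gap : 0 < `|y| - M by rewrite subr_gt0.
pose mu := Num.max 0 ((C - ys y) / (`|y| - M)).
have mu_ge0 : 0 <= mu by rewrite le_max lexx.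
have mu_gap : C - ys y <= mu * (`|y| - M) by rewrite -ler_pdivrMr // le_max lexx orbT.
pose g y' := 1 * ys y' + mu * l y'.
have dg : dual_elt g := dual_elt_comb 1 mu dys dl.
have Tyg : T (y, g).
  apply: maximal_monotone_mem => // a as_ Ta; have das : dual_elt as_ := opT _ Ta.
  have la : l a <= M.
    by apply: le_trans (le_trans (ler_norm _) (l_norm a)) (domM a _); exists as_.
  have := le_trans (fitzpatrick_ge y ys Ta) fitzC.
  rewrite lee_fin (dual_eltB dg) (dual_eltB das) /g ly.
  by have := ler_wpM2l mu_ge0 la; lra.
by have := domM y (ex_intro _ g Tyg); lra.
Qed.

Lemma bounded_domain_P1D h (M : R) : maximal_monotone T -> fitz_family T h ->
  (forall a, domain T a -> `|a| <= M) -> forall x, P1D h x -> `|x| <= M.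
Proof.
move=> mT hF domM x [xs [dxs hx]]; have [opT _] := mT.
have [_ [_ [h_ge _]]] := hF.
move: (h_ge x xs dxs) hx (fitz_family_ge_fitzpatrick x opT hF dxs).
case: (h x xs) => [r| |] // _ _ fitz_le.
exact: bounded_domain_fitzpatrick mT domM dxs fitz_le.
Qed.

Lemma domain_sub_P1D h : operator T -> fitz_family T h -> domain T `<=` P1D h.
Proof.
move=> opT [_ [_ [_ h_eq]]] a [as_ Ta].
by exists as_; split; [exact: opT Ta | rewrite h_eq // ltry].
Qed.

End Fitzpatrick.

(** * Affine minorants of weak-star lower semicontinuous convex functions *)

Section Minorant.
Variables (R : realType) (X : normedModType R).
Implicit Types (h : X -> (X -> R) -> \bar R) (g : X -> R).

Local Notation W := (X * (X -> R) * R)%type.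

Lemma triple_eq (w w' : W) :
  w.1.1 = w'.1.1 -> w.1.2 = w'.1.2 -> w.2 = w'.2 -> w = w'.
Proof. by case: w => [[? ?] ?]; case: w' => [[? ?] ?] /= -> -> ->. Qed.

Lemma linear_form_eval (L : (X -> R) -> R) (ys : seq X) : linear_form L ->
  (forall g, (forall y, y \in ys -> g y = 0) -> L g = 0) ->
  exists y0, forall g, dual_elt g -> L g = g y0.
Proof.
elim: ys L => [|y ys IH] L hL L0.
  by exists 0 => g dg; rewrite dual_elt0 //; exact: L0.
pose delta v : R := if v == y then 1 else 0.
pose L' g := L g - g y * L delta.
have hL' : linear_form L'.
  by move=> a g1 g2; rewrite /L' hL; change ((a *: g1 + g2) y) with (a * g1 y + g2 y); ring.
have L'0 g : (forall v, v \in ys -> g v = 0) -> L' g = 0.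
  move=> g0; rewrite /L' -linear_formZ // -linear_formB //; apply: L0 => v.
  change ((g - g y *: delta) v) with (g v - g y * delta v).
  rewrite in_cons /delta => /orP[/eqP ->|ys_v]; first by rewrite eqxx mulr1 subrr.
  case: eqP => [<-|_]; first by rewrite g0 // mulr1 subrr.
  by rewrite mulr0 g0 // subrr.
have [y0 Ly0] := IH L' hL' L'0.
exists (y0 + L delta *: y) => g dg.
by rewrite (linear_formD (dual_elt_linear dg)) dual_eltZ // -Ly0 // /L'; ring.
Qed.

(* A linear form dominated by this gauge is norm-continuous in [u], sees [us]
   only through its values on [ys], and is nonnegative in [r]. *)
Definition box_gauge (e d : R) (ys : seq X) (w : W) : R :=
  (`|w.1.1| + \sum_(y <- ys) `|w.1.2 y|) / e + Num.max w.2 0 / d.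

Lemma box_gauge_sublinear e d ys : 0 < e -> 0 < d -> sublinear (box_gauge e d ys).
Proof.
move=> e_gt0 d_gt0; rewrite /box_gauge.
split=> [[[a g] s] [[b k] r]|c [[a g] s] c_ge0] /=.
  have gk : \sum_(y <- ys) `|(g + k) y| <= \sum_(y <- ys) `|g y| + \sum_(y <- ys) `|k y|.
    by rewrite -big_split /=; apply: ler_sum => y _; exact: ler_normD.
  have sr : Num.max (s + r) 0 <= Num.max s 0 + Num.max r 0.
    have : s <= Num.max s 0 /\ 0 <= Num.max s 0 by rewrite !le_max !lexx orbT.
    have : r <= Num.max r 0 /\ 0 <= Num.max r 0 by rewrite !le_max !lexx orbT.
    by rewrite ge_max => -[? ?] [? ?]; apply/andP; split; lra.
  have ei : 0 <= e^-1 by rewrite invr_ge0 ltW.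
  have di : 0 <= d^-1 by rewrite invr_ge0 ltW.
  rewrite addrACA -!mulrDl; apply: lerD; apply: ler_wpM2r => //.
  by have := ler_normD a b; lra.
have -> : \sum_(y <- ys) `|c * g y| = c * \sum_(y <- ys) `|g y|.
  by rewrite mulr_sumr; apply: eq_bigr => y _; rewrite normrM ger0_norm.
have -> : Num.max (c * s) 0 = c * Num.max s 0 by rewrite maxr_pMr // mulr0.
by rewrite normrZ ger0_norm //; ring.
Qed.

Definition shifted_epigraph h x z t : set W :=
  [set w | exists u us r, [/\ dual_elt us, (h u us <= r%:E)%E &
     w = ((u - x, us - z), r - t)]].

Lemma shifted_epigraph_closed h x z t :
  convex_fn h -> segment_closed (shifted_epigraph h x z t).
Proof.
move=> h_cvx _ _ l [u1 [us1 [r1 [d1 h1 ->]]]] [u2 [us2 [r2 [d2 h2 ->]]]] l01.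
exists (l *: u1 + (1 - l) *: u2), (fun v => l * us1 v + (1 - l) * us2 v),
  (l * r1 + (1 - l) * r2); split; [exact: dual_elt_comb | exact: h_cvx |].
apply: triple_eq => /=.
- by rewrite !scalerBr addrACA -opprD -scalerDl subrKC scale1r.
- apply/funext => v.
  change (l * (us1 v - z v) + (1 - l) * (us2 v - z v) =
          l * us1 v + (1 - l) * us2 v - z v); ring.
- by change (l * (r1 - t) + (1 - l) * (r2 - t) = l * r1 + (1 - l) * r2 - t); ring.
Qed.

Lemma box_gauge_ge1 h x z (t t' e : R) ys : t < t' -> 0 < e ->
  (forall u us, dual_elt us -> `|u - x| < e ->
     (forall y, y \in ys -> `|us y - z y| < e) -> (t'%:E < h u us)%E) ->
  forall w, shifted_epigraph h x z t w -> 1 <= box_gauge e (t' - t) ys w.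
Proof.
move=> tt' e_gt0 h_gt _ [u [us [r [dus hr ->]]]]; rewrite /box_gauge /=.
have d_gt0 : 0 < t' - t by rewrite subr_gt0.
have S_ge0 : 0 <= \sum_(y <- ys) `|(us - z) y| by apply: sumr_ge0.
have r_ge0 : 0 <= Num.max (r - t) 0 / (t' - t).
  by apply: divr_ge0; [rewrite le_max lexx orbT | exact: ltW].
have ux_ge0 := normr_ge0 (u - x).
have [e_le|ux_lt] := leP e `|u - x|.
  suff : 1 <= (`|u - x| + \sum_(y <- ys) `|(us - z) y|) / e by lra.
  by rewrite ler_pdivlMr // mul1r; lra.
have [/hasP [y ys_y e_le]|far] := boolP (has (fun y => e <= `|us y - z y|) ys).
  suff : 1 <= (`|u - x| + \sum_(y <- ys) `|(us - z) y|) / e by lra.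
  rewrite ler_pdivlMr // mul1r.
  have : `|(us - z) y| <= \sum_(v <- ys) `|(us - z) v|.
    by rewrite (big_rem y) //= lerDl sumr_ge0.
  change (`|(us - z) y|) with (`|us y - z y|); lra.
have near y : y \in ys -> `|us y - z y| < e.
  by move=> ys_y; move/hasPn : far => /(_ y ys_y) /=; rewrite -ltNge.
have := lt_le_trans (h_gt u us dus ux_lt near) hr; rewrite lte_fin => t'r.
suff : 1 <= Num.max (r - t) 0 / (t' - t).
  have : 0 <= (`|u - x| + \sum_(y <- ys) `|(us - z) y|) / e.
    by apply: divr_ge0; [exact: addr_ge0 | exact: ltW].
  lra.
by rewrite ler_pdivlMr // mul1r le_max; apply/orP; left; lra.
Qed.

Lemma box_gauge_dominated (l : W -> R) e d ys : 0 < e -> 0 < d -> linear_form l ->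
  (forall w, l w <= box_gauge e d ys w) ->
  exists l1 y0 al, [/\ dual_elt l1, 0 <= al &
    forall u us r, dual_elt us -> l ((u, us), r) = l1 u + us y0 + al * r].
Proof.
move=> e_gt0 d_gt0 hl l_le.
pose l1 a := l ((a, 0), 0); pose l2 g := l ((0, g), 0); pose al := l ((0, 0), 1).
have sum0 g : (forall y, y \in ys -> g y = 0) -> \sum_(y <- ys) `|g y| = 0.
  by move=> g0; rewrite big_seq big1 // => y /g0 ->; rewrite normr0.
have hl1 : linear_form l1.
  by move=> c a b; rewrite /l1 -hl; congr l; apply: triple_eq; rewrite /= ?scaler0 ?mulr0 ?addr0.
have hl2 : linear_form l2.
  by move=> c a b; rewrite /l2 -hl; congr l; apply: triple_eq; rewrite /= ?scaler0 ?mulr0 ?addr0.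
have l1_le a : l1 a <= e^-1 * `|a|.
  apply: le_trans (l_le _) _; rewrite /box_gauge /= sum0 // maxxx mul0r addr0 addr0.
  by rewrite mulrC.
have dl1 : dual_elt l1.
  apply: (@bounded_linear_dual_elt _ _ _ e^-1) => // [|a]; first by rewrite invr_gt0.
  rewrite ler_norml l1_le andbT lerNl -linear_formN //.
  by apply: le_trans (l1_le _) _; rewrite normrN.
have al_ge0 : 0 <= al.
  have := l_le ((0, 0), -1); rewrite /box_gauge /= sum0 // normr0 add0r mul0r add0r.
  have -> : Num.max (-1 : R) 0 = 0 by apply/max_idPr; rewrite lerN10.
  have -> : l ((0, 0), -1) = - al by rewrite -linear_formN //; congr l; apply: triple_eq; rewrite /= ?oppr0.
  by rewrite mul0r oppr_le0.
have l20 g : (forall y, y \in ys -> g y = 0) -> l2 g = 0.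
  have l2_le0 g' : (forall y, y \in ys -> g' y = 0) -> l2 g' <= 0.
    move=> g'0; apply: le_trans (l_le _) _.
    by rewrite /box_gauge /= sum0 // normr0 addr0 maxxx !mul0r addr0.
  move=> g0; apply/eqP; rewrite eq_le l2_le0 //= -oppr_le0 -linear_formN //.
  by apply: l2_le0 => y /g0; change ((- g) y) with (- g y) => ->; rewrite oppr0.
have [y0 l2E] := linear_form_eval hl2 l20.
exists l1, y0, al; split => // u us r dus.
have -> : ((u, us), r) = ((u, 0), 0) + ((0, us), 0) + r *: ((0, 0), 1) :> W.
  by apply: triple_eq; rewrite /= ?scaler0 ?addr0 ?add0r //; exact: (esym (mulr1 _)).
by rewrite !(linear_formD hl) (linear_formZ hl) -/(l2 us) l2E // mulrC.
Qed.

Definition separating h x z (t : R) (l : X -> R) (y0 : X) (al : R) :=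
  forall u us r, dual_elt us -> (h u us <= r%:E)%E ->
    1 <= l (u - x) + (us y0 - z y0) + al * (r - t).

Lemma epigraph_separation h x z (t : R) :
  convex_fn h -> lsc_strong_weakstar h -> dual_elt z -> (t%:E < h x z)%E ->
  exists l y0 al, [/\ dual_elt l, 0 <= al & separating h x z t l y0 al].
Proof.
move=> h_cvx h_lsc dz t_lt.
have [t' [tt' t'_lt]] : exists t', t < t' /\ (t'%:E < h x z)%E.
  move: t_lt; case: (h x z) => [r| |] //.
    by rewrite lte_fin => tr; exists ((t + r) / 2); rewrite lte_fin; split; lra.
  by move=> _; exists (t + 1); split; [lra | exact: ltry].
have [e [ys [e_gt0 h_gt]]] := h_lsc x z t' dz t'_lt.
have d_gt0 : 0 < t' - t by rewrite subr_gt0.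
have [l [hl l_le lK]] := sublinear_separation (@box_gauge_sublinear e _ ys e_gt0 d_gt0)
  (@shifted_epigraph_closed h x z t h_cvx) (box_gauge_ge1 tt' e_gt0 h_gt).
have [l1 [y0 [al [dl1 al_ge0 lE]]]] := box_gauge_dominated e_gt0 d_gt0 hl l_le.
exists l1, y0, al; split => // u us r dus hr.
have := lK _ (ex_intro _ u (ex_intro _ us (ex_intro _ r (And3 dus hr erefl)))).
by rewrite lE //; exact: dual_elt_dsub.
Qed.

Definition affine_minorant h (ys : X -> R) (y : X) (c : R) :=
  dual_elt ys /\ forall u us, dual_elt us -> ((ys u + us y - c)%:E <= h u us)%E.

Lemma le_ereal_of_upper (a : R) (e : \bar R) :
  e != -oo%E -> (forall r, (e <= r%:E)%E -> a <= r) -> (a%:E <= e)%E.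
Proof.
case: e => [r _ ar | _ _ | //]; last exact: leey.
by rewrite lee_fin; apply: ar.
Qed.

Section AffineMinorant.
Variables (h : X -> (X -> R) -> \bar R) (x : X) (z : X -> R) (t : R).
Hypotheses (h_proper : forall u us, dual_elt us -> h u us != -oo%E) (dz : dual_elt z).

Lemma minorant_of_nonvertical l y0 al : dual_elt l -> 0 < al ->
  separating h x z t l y0 al ->
  exists ys y c, affine_minorant h ys y c /\ t < ys x + z y - c.
Proof.
move=> dl al_gt0 sep; have al_neq0 : al != 0 by rewrite gt_eqF.
have ali_gt0 : 0 < al^-1 by rewrite invr_gt0.
pose ys u := - al^-1 * l u.
pose c := - (t + al^-1 + al^-1 * l x + al^-1 * z y0).
exists ys, (- al^-1 *: y0), c; split; last first.
  by rewrite /ys /c (dual_eltZ dz); lra.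
split=> [|u us dus]; first exact: dual_elt_scale.
apply: le_ereal_of_upper (h_proper u dus) _ => r hr.
have := sep u us r dus hr; rewrite (dual_eltB dl) => H.
rewrite (dual_eltZ dus) -(ler_pM2l al_gt0).
have -> : al * (ys u + - al^-1 * us y0 - c) = al * t + 1 - l u + l x - us y0 + z y0.
  by rewrite /ys /c; field.
lra.
Qed.

(* A possibly vertical separating hyperplane ([al = 0]) is tilted by the
   fixed affine minorant [(ys0, y1, c0)] until it becomes non-vertical. *)
Lemma minorant_of_vertical l y0 al ys0 y1 c0 : dual_elt l -> 0 <= al ->
  separating h x z t l y0 al -> affine_minorant h ys0 y1 c0 ->
  exists ys y c, affine_minorant h ys y c /\ t < ys x + z y - c.
Proof.
move=> dl al_ge0 sep [dys0 m0].
pose A0 := ys0 x + z y1 - c0.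
pose mu := Num.max 0 (t - A0) + 1.
have mu_ge : 0 <= Num.max 0 (t - A0) /\ t - A0 <= Num.max 0 (t - A0).
  by rewrite !le_max !lexx orbT.
have mu_gt0 : 0 < mu by rewrite /mu; lra.
pose D := 1 + mu * al.
have D_gt0 : 0 < D by rewrite /D; have := mulr_ge0 (ltW mu_gt0) al_ge0; lra.
have D_neq0 : D != 0 by rewrite gt_eqF.
pose ys u := D^-1 * ys0 u + (- (D^-1 * mu)) * l u.
pose y := D^-1 *: (y1 - mu *: y0).
pose c := D^-1 * (c0 - mu * al * t - mu - mu * l x - mu * z y0).
have yE us : dual_elt us -> us y = D^-1 * (us y1 - mu * us y0).
  by move=> dus; rewrite /y (dual_eltZ dus) (dual_eltB dus) (dual_eltZ dus).
exists ys, y, c; split; last first.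
  rewrite (yE _ dz) -(ltr_pM2l D_gt0).
  have -> : D * (ys x + D^-1 * (z y1 - mu * z y0) - c) = A0 + mu * al * t + mu.
    by rewrite /ys /c /A0; field.
  have -> : D * t = t + mu * al * t by rewrite /D; ring.
  have : t - A0 < mu by rewrite /mu; lra.
  lra.
split=> [|u us dus]; first exact: dual_elt_comb.
apply: le_ereal_of_upper (h_proper u dus) _ => r hr.
have := sep u us r dus hr; rewrite (dual_eltB dl) => H.
have := le_trans (m0 u us dus) hr; rewrite lee_fin => H0.
rewrite (yE _ dus) -(ler_pM2l D_gt0).
have -> : D * (ys u + D^-1 * (us y1 - mu * us y0) - c) =
   (ys0 u + us y1 - c0) + mu * (al * t + 1 - l u + l x - us y0 + z y0).
  by rewrite /ys /c; field.
have -> : D * r = r + mu * (al * r) by rewrite /D; ring.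
by have : mu * (al * t + 1 - l u + l x - us y0 + z y0) <= mu * (al * r);
  [apply: ler_wpM2l; [exact: ltW | lra] | lra].
Qed.

End AffineMinorant.

Lemma exists_affine_minorant h x xs0 z (t : R) :
  convex_fn h -> lsc_strong_weakstar h ->
  (forall u us, dual_elt us -> h u us != -oo%E) ->
  dual_elt xs0 -> (h x xs0 < +oo)%E -> dual_elt z -> (t%:E < h x z)%E ->
  exists ys y c, affine_minorant h ys y c /\ t < ys x + z y - c.
Proof.
move=> h_cvx h_lsc h_proper d0 hx0 dz t_lt.
have [r0 hr0] : exists r0 : R, h x xs0 = r0%:E.
  by move: (h_proper x xs0 d0) hx0; case: (h x xs0) => [r| |] //; exists r.
have r0_lt : ((r0 - 1)%:E < h x xs0)%E by rewrite hr0 lte_fin; lra.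
have [l0 [y0 [al0 [dl0 _ sep0]]]] := epigraph_separation h_cvx h_lsc d0 r0_lt.
have al0_gt0 : 0 < al0.
  have hr0_le : (h x xs0 <= r0%:E)%E by rewrite hr0.
  have := sep0 x xs0 r0 d0 hr0_le.
  by rewrite subrr dual_elt0 // subrr; lra.
have [ys0 [y1 [c0 [m0 _]]]] := minorant_of_nonvertical h_proper d0 dl0 al0_gt0 sep0.
have [l [y [al [dl al_ge0 sep]]]] := epigraph_separation h_cvx h_lsc dz t_lt.
exact: (minorant_of_vertical h_proper dz dl al_ge0 sep m0).
Qed.

End Minorant.

(** * Operators with bounded domain *)

Lemma bounded_setP (R : realType) (X : normedModType R) (A : set X) :
  bounded_set A <-> exists M : R, 0 <= M /\ forall x, A x -> `|x| <= M.
Proof.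
split=> [[M0 [_ AM]]|[M [_ AM]]].
  exists (Num.max (M0 + 1) 0); split=> [|x Ax]; first by rewrite le_max lexx orbT.
  by apply: AM Ax; rewrite lt_max ltrDl ltr01.
exists M; split=> [|N MN x Ax]; first exact: num_real.
exact: le_trans (AM x Ax) (ltW MN).
Qed.

Lemma le0_of_forall_mul_le (R : realFieldType) (a b : R) :
  (forall s, 0 <= s -> s * a <= b) -> a <= 0.
Proof.
move=> sab; rewrite leNgt; apply/negP => a_gt0.
have := sab ((`|b| + 1) / a) (divr_ge0 (addr_ge0 (normr_ge0 b) ler01) (ltW a_gt0)).
by rewrite mulfVK ?gt_eqF //; have := ler_norm b; lra.
Qed.

Section BoundedDomain.
Variables (R : realType) (X : normedModType R) (T : set (X * (X -> R))).
Hypothesis mT : maximal_monotone T.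

Lemma fitz_family_proper h : fitz_family T h ->
  forall u us, dual_elt us -> h u us != -oo%E.
Proof. by move=> [_ [_ [h_ge _]]] u us dus; have := h_ge u us dus; case: (h u us). Qed.

Lemma fitz_lower_lipschitz (M : R) h x xs0 :
  (forall a, domain T a -> `|a| <= M) -> fitz_family T h -> lsc_strong_weakstar h ->
  dual_elt xs0 -> (h x xs0 < +oo)%E ->
  forall z w (t : R), dual_elt z -> dual_elt w -> (t%:E < h x z)%E ->
  ((t - M * dual_norm (dsub z w))%:E <= h x w)%E.
Proof.
move=> domM hF h_lsc d0 hx0 z w t dz dw t_lt; have [opT _] := mT.
have [h_cvx [_ [_ h_eq]]] := hF.
have [ys [y [c [[dys m] t_lt']]]] :=
  exists_affine_minorant h_cvx h_lsc (fitz_family_proper hF) d0 hx0 dz t_lt.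
have yM : `|y| <= M.
  apply: (bounded_domain_fitzpatrick mT domM dys (C := c)).
  apply: fitzpatrick_le => a as_ Ta.
  by have := m a as_ (opT _ Ta); rewrite h_eq // !lee_fin; lra.
apply: le_trans (m x w dw); rewrite lee_fin.
have dd := dual_elt_dsub dz dw.
have := le_dual_norm y dd; have := ler_wpM2l (dual_norm_ge0 dd) yM.
by rewrite /dsub ler_norml => ? /andP[? ?]; nra.
Qed.

Lemma bounded_domain_real_lip (M : R) h :
  (forall a, domain T a -> `|a| <= M) -> fitz_family T h -> lsc_strong_weakstar h ->
  real_lip M h.
Proof.
move=> domM hF h_lsc x [xs0 [d0 hx0]].
have low := fitz_lower_lipschitz domM hF h_lsc d0 hx0.
have [r0 hr0] : exists r0 : R, h x xs0 = r0%:E.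
  by move: (fitz_family_proper hF x d0) hx0; case: (h x xs0) => [r| |] //; exists r.
have h_fin xs : dual_elt xs -> h x xs \is a fin_num.
  move=> dxs; rewrite fin_numE fitz_family_proper //=; apply/negP => /eqP hinf.
  have := low xs xs0 (r0 + M * dual_norm (dsub xs xs0) + 1) dxs d0.
  by rewrite hinf hr0 lee_fin => /(_ (ltry _)); lra.
split=> // xs zs dxs dzs.
have lip xs' zs' : dual_elt xs' -> dual_elt zs' ->
    fine (h x xs') <= fine (h x zs') + M * dual_norm (dsub xs' zs').
  move=> dxs' dzs'; apply/ler_addgt0Pr => e e_gt0.
  have ha : h x xs' = (fine (h x xs'))%:E by rewrite fineK // h_fin.
  have hb : h x zs' = (fine (h x zs'))%:E by rewrite fineK // h_fin.
  have : ((fine (h x xs') - e)%:E < h x xs')%E by rewrite {2}ha lte_fin; lra.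
  by move=> /(low _ _ _ dxs' dzs'); rewrite {1}hb lee_fin; lra.
rewrite -(fineK (h_fin _ dxs)) -(fineK (h_fin _ dzs)) -EFinB lee_fin ler_norml.
have := lip _ _ dxs dzs; have := lip _ _ dzs dxs; rewrite dual_norm_dsubC; lra.
Qed.

Lemma real_lip_P1D_le h (L : R) x :
  fitz_family T h -> 0 <= L -> real_lip L h -> P1D h x -> `|x| <= L.
Proof.
move=> [_ [_ [h_ge _]]] L_ge0 hL x_P1D; have [h_fin h_lip] := hL x x_P1D.
case: x_P1D => xs0 [d0 _].
have [l [dl lx l_norm]] := norming_functional x.
suff : forall s, 0 <= s -> s * (`|x| - L) <= fine (h x xs0) + L * dual_norm xs0.
  by move=> /le0_of_forall_mul_le; lra.
move=> s s_ge0; pose w v := s * l v.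
have dw : dual_elt w := dual_elt_scale s dl.
have := h_ge x w dw; have := h_lip w xs0 dw d0.
rewrite -(fineK (h_fin _ dw)) -(fineK (h_fin _ d0)) -EFinB !lee_fin /w lx.
move=> /ler_normlP [_ lip] hw.
have dn : dual_norm (dsub w xs0) <= s + dual_norm xs0.
  apply: dual_norm_le => v v1; rewrite /dsub /w.
  have : `|s * l v| <= s.
    by rewrite normrM ger0_norm // ler_piMr // (le_trans (l_norm v)).
  have := le_dual_norm v d0; have := ler_wpM2l (dual_norm_ge0 d0) v1.
  by have := ler_normB (s * l v) (xs0 v); nra.
by have := ler_wpM2l L_ge0 dn; nra.
Qed.

End BoundedDomain.

Theorem lemma4p5 (R : realType) (X : completeNormedModType R)
  (T : set (X * (X -> R))) :
  maximal_monotone T ->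
  [<-> bounded_set (domain T);
       (forall h, fitz_family T h -> bounded_set (P1D h));
       (exists h, fitz_family T h /\ bounded_set (P1D h));
       (exists L : R, 0 <= L /\
          forall h, fitz_family T h -> lsc_strong_weakstar h -> real_lip L h);
       (exists h, fitz_family T h /\ lsc_strong_weakstar h /\
          exists L : R, 0 <= L /\ real_lip L h)].
Proof.
move=> mT; have [opT _] := mT; have phiF := fitzpatrick_fitz_family mT.
tfae.
- move=> /bounded_setP [M [M_ge0 domM]] h hF; apply/bounded_setP.
  by exists M; split => //; exact: (bounded_domain_P1D mT hF domM).
- by move=> P1D_bd; exists (fitzpatrick T); split => //; exact: P1D_bd.
- move=> [h [hF /bounded_setP [M [M_ge0 P1D_M]]]]; exists M; split => // g gF g_lsc.
  by apply: (bounded_domain_real_lip mT) => // a Da; exact: P1D_M _ (domain_sub_P1D opT hF Da).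
- move=> [L [L_ge0 lipL]]; exists (fitzpatrick T); split => //.
  have phi_lsc := fitzpatrick_lsc_weakstar opT.
  by split => //; exists L; split => //; exact: lipL.
- move=> [h [hF [_ [L [L_ge0 hL]]]]]; apply/bounded_setP; exists L; split => // a Da.
  exact: real_lip_P1D_le hF L_ge0 hL (domain_sub_P1D opT hF Da).
Qed.
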